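(* For every integer $n\ge2$, if $T$ is a uniformly random standard Young tableau of shape $(n,n,n)$, then $T_{1,2}\in\{2,3,4\}$ and $$\mathbb E\big[x^{T_{1,2}}\big]=\frac{2(n-1)}{3n-1}\,x^2+\frac{8(n-1)(n+1)}{3(3n-1)(3n-2)}\,x^3+\frac{(n+1)(n+2)}{3(3n-1)(3n-2)}\,x^4 .$$
   Context: A standard Young tableau of shape $(n,n,n)$ is a bijective filling $T$ of the cells $[a,b]$ ($1\le a\le 3$, $1\le b\le n$; row $a$, column $b$) by $\{1,\dots,3n\}$ that increases along each row and down each column. $T_{a,b}$ denotes the entry in cell $[a,b]$. *)

From mathcomp Require Import all_boot all_order all_algebra.
Set Implicit Arguments. Unset Strict Implicit. Unset Printing Implicit Defensive.

(* A filling of the shape (n,n,n): cell (a,b) with a : 'I_3 (row a+1),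
   b : 'I_n (column b+1); the stored value v : 'I_(3n) represents the
   entry v+1 in {1,...,3n}. *)
Definition filling (n : nat) := {ffun 'I_3 * 'I_n -> 'I_(3 * n)}.

(* Entry T_{a,b} with 1-based indices a, b (0 outside the shape). *)
Definition entry (n : nat) (T : filling n) (a b : nat) : nat :=
  match @insub nat (fun i => i < 3) _ a.-1, @insub nat (fun j => j < n) _ b.-1 with
  | Some i, Some j => (T (i, j) : nat).+1
  | _, _ => 0
  end.

Definition is_syt (n : nat) (T : filling n) : bool :=
  [&& injectiveb T,
      [forall k : 'I_(3 * n), exists c, T c == k],
      [forall a : 'I_3, forall b1 : 'I_n, forall b2 : 'I_n,
          (b1 < b2) ==> (T (a, b1) < T (a, b2))] &
      [forall b : 'I_n, forall a1 : 'I_3, forall a2 : 'I_3,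
          (a1 < a2) ==> (T (a1, b) < T (a2, b))]].

Definition SYT (n : nat) : {set filling n} := [set T | is_syt T].

From mathcomp Require Import all_boot all_order all_algebra.
From mathcomp Require Import zify ring.
Import Order.TTheory GRing.Theory Num.Theory.
Set Implicit Arguments. Unset Strict Implicit. Unset Printing Implicit Defensive.

(* A standard Young tableau T of shape (n,n,n) is recorded by its
   row word: the letter at position k is the row (0, 1 or 2) holding the
   entry k+1.  Row words are exactly the ballot words of content (n,n,n)
   (every prefix has at least as many 0s as 1s and at least as many 1s as
   2s), and the inverse map sends a ballot word to the tableau whose cell
   (a,b) holds the position of the (b+1)-th letter a.  Because each letter
   occurs n times, such a word is ballot iff every suffix has at most as
   many 0s as 1s and at most as many 1s as 2s; suffix-ballot words of any
   content (c0 <= c1 <= c2) are enumerated by recursion on their first letter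
   (suffix_ballots), and their number obeys the hook length formula of the
   three-row shape (c2,c1,c0) (hook_formula), proved along that recursion.
   Finally T_{1,2} is one plus the position of the second 0 in the row word,
   and every square ballot word begins with 00, 010 or 0120; hence the sum
   over SYT(n,n,n) splits into three sums over suffix-ballot words of
   smaller contents with constant summands x^2, x^3, x^4, and the hook
   length formula evaluates the three ratios of their sizes. *)

(* Number of occurrences of the letter a in the word w; kept folded by simpl
   so that arithmetic tactics see a single atom. *)
Definition cnt (a : nat) (w : seq nat) : nat := count_mem a w.
Arguments cnt : simpl never.

Lemma cnt_nil (a : nat) : cnt a [::] = 0. Proof. by []. Qed.

Lemma cnt_cons (a x : nat) (w : seq nat) : cnt a (x :: w) = (x == a) + cnt a w. Proof. by []. Qed.

Lemma cnt_cat (a : nat) (w1 w2 : seq nat) : cnt a (w1 ++ w2) = cnt a w1 + cnt a w2.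
Proof. exact: count_cat. Qed.

Lemma cnt_take_mono (a : nat) (w : seq nat) k1 k2 : k1 <= k2 -> cnt a (take k1 w) <= cnt a (take k2 w).
Proof. by move=> le12; rewrite -(subnKC le12) takeD cnt_cat leq_addr. Qed.

Lemma cnt_take_nth (a : nat) (w : seq nat) k : k < size w ->
  cnt a (take k.+1 w) = cnt a (take k w) + (nth 0 w k == a).
Proof. by move=> lt_k; rewrite (take_nth 0 lt_k) -cats1 cnt_cat cnt_cons cnt_nil addn0. Qed.

Lemma cnt_take_drop (a : nat) (w : seq nat) k : cnt a (take k w) + cnt a (drop k w) = cnt a w.
Proof. by rewrite -cnt_cat cat_take_drop. Qed.

(* occ a b w is the position of the (b+1)-th occurrence of the letter a in w. *)
Fixpoint occ (a b : nat) (w : seq nat) : nat :=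
  if w is x :: w' then
    if x == a then (if b is b'.+1 then (occ a b' w').+1 else 0)
    else (occ a b w').+1
  else 0.

Lemma occ_spec (a b : nat) (w : seq nat) : b < cnt a w ->
  [/\ occ a b w < size w, nth 0 w (occ a b w) = a & cnt a (take (occ a b w) w) = b].
Proof.
elim: w b => [|x w IHw] b; rewrite ?cnt_nil // cnt_cons /=.
case: eqVneq => [->|neq_xa] /=.
  case: b => [|b] /=; first by rewrite cnt_nil.
  by rewrite ltnS => /IHw[lt_occ nth_occ cnt_occ]; rewrite cnt_cons eqxx cnt_occ.
by rewrite add0n => /IHw[lt_occ nth_occ cnt_occ]; rewrite cnt_cons (negbTE neq_xa).
Qed.

Lemma occ_unique (a : nat) (w : seq nat) k : k < size w -> nth 0 w k = a -> occ a (cnt a (take k w)) w = k.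
Proof.
elim: w k => [|x w IHw] [|k] //= lt_k; first by move=> <-; rewrite cnt_nil eqxx.
by move=> /(IHw _ lt_k) occ_k; rewrite cnt_cons; case: (x == a) => /=; rewrite add0n occ_k.
Qed.

Lemma occ_mono_index (a b1 b2 : nat) (w : seq nat) : b1 < b2 -> b2 < cnt a w -> occ a b1 w < occ a b2 w.
Proof.
move=> lt12 lt2; have [_ _ cnt1] := occ_spec (ltn_trans lt12 lt2).
have [_ _ cnt2] := occ_spec lt2.
by rewrite ltnNge; apply/negP => /(cnt_take_mono a w); rewrite cnt1 cnt2; lia.
Qed.

Lemma occ_mono_letter (a1 a2 b : nat) (w : seq nat) :
  (forall k, cnt a2 (take k w) <= cnt a1 (take k w)) -> a1 != a2 ->
  b < cnt a1 w -> b < cnt a2 w -> occ a1 b w < occ a2 b w.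
Proof.
move=> dom neq12 lt1 lt2; have [_ _ cnt1] := occ_spec lt1.
have [lt_occ2 nth2 cnt2] := occ_spec lt2.
have := dom (occ a2 b w).+1; rewrite !cnt_take_nth // nth2 eqxx eq_sym (negbTE neq12) cnt2.
by rewrite ltnNge; apply: contraL => /(cnt_take_mono a1 w); rewrite cnt1; lia.
Qed.

Definition has_content (w : seq nat) (c0 c1 c2 : nat) : Prop :=
  [/\ all (fun x => x < 3) w, cnt 0 w = c0, cnt 1 w = c1 & cnt 2 w = c2].

Definition ballot (w : seq nat) : Prop :=
  forall k, cnt 2 (take k w) <= cnt 1 (take k w) <= cnt 0 (take k w).

(* The mirror condition on suffixes, which is the one compatible with
   building words letter by letter from the left. *)
Definition suffix_ballot (w : seq nat) : Prop :=
  forall k, cnt 0 (drop k w) <= cnt 1 (drop k w) <= cnt 2 (drop k w).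

Lemma ballot_dominates (w : seq nat) (a1 a2 : nat) : ballot w -> a1 < a2 < 3 ->
  forall k, cnt a2 (take k w) <= cnt a1 (take k w).
Proof.
move=> bal /andP[lt12 lt2] k; have /andP[le21 le10] := bal k.
by case: a1 a2 lt12 lt2 => [|[|a1]] [|[|[|a2]]] //= _ _; lia.
Qed.

Lemma ballot_suffix_ballot (w : seq nat) n : has_content w n n n -> ballot w <-> suffix_ballot w.
Proof.
case=> _ c0 c1 c2; have sum_a a := cnt_take_drop a w.
by split=> bal k; have := bal k; have := sum_a 0 k; have := sum_a 1 k; have := sum_a 2 k; lia.
Qed.

Lemma suffix_ballot_cons (x : nat) (w : seq nat) : suffix_ballot (x :: w) <->
  (cnt 0 (x :: w) <= cnt 1 (x :: w) <= cnt 2 (x :: w)) /\ suffix_ballot w.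
Proof.
split=> [bal | [bal0 bal] [|k] //]; last exact: bal.
by split=> [|k]; [exact: bal 0 | exact: bal k.+1].
Qed.

Fixpoint suffix_ballots (m c0 c1 c2 : nat) : seq (seq nat) :=
  if m is m'.+1 then
    [seq 0 :: w | w <- if 0 < c0 then suffix_ballots m' c0.-1 c1 c2 else [::]] ++
    [seq 1 :: w | w <- if c0 < c1 then suffix_ballots m' c0 c1.-1 c2 else [::]] ++
    [seq 2 :: w | w <- if c1 < c2 then suffix_ballots m' c0 c1 c2.-1 else [::]]
  else if [&& c0 == 0, c1 == 0 & c2 == 0] then [:: [::]] else [::].

Lemma suffix_ballotsS m c0 c1 c2 : suffix_ballots m.+1 c0 c1 c2 =
  [seq 0 :: w | w <- if 0 < c0 then suffix_ballots m c0.-1 c1 c2 else [::]] ++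
  [seq 1 :: w | w <- if c0 < c1 then suffix_ballots m c0 c1.-1 c2 else [::]] ++
  [seq 2 :: w | w <- if c1 < c2 then suffix_ballots m c0 c1 c2.-1 else [::]].
Proof. by []. Qed.

Lemma mem_map_cons (y : nat) (s : seq (seq nat)) u :
  (u \in [seq y :: v | v <- s]) = if u is x :: w then (x == y) && (w \in s) else false.
Proof.
case: u => [|x w]; first by apply/mapP=> -[].
apply/mapP/andP => [[v s_v [-> ->]] | [/eqP-> s_w]]; last by exists w.
by rewrite eqxx.
Qed.

Lemma mem_if (s : seq (seq nat)) b u : (u \in if b then s else [::]) = b && (u \in s).
Proof. by case: b. Qed.

Lemma suffix_ballot_cons_step (x : nat) (w : seq nat) m d0 d1 d2 c0 c1 c2 :
  x < 3 -> c0 = d0 + (x == 0) -> c1 = d1 + (x == 1) -> c2 = d2 + (x == 2) ->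
  c0 <= c1 <= c2 ->
  [/\ size w = m, has_content w d0 d1 d2 & suffix_ballot w] <->
  [/\ size (x :: w) = m.+1, has_content (x :: w) c0 c1 c2 & suffix_ballot (x :: w)].
Proof.
move=> lt_x3 -> -> -> /andP[le01 le12].
split=> [[size_w [all_w n0 n1 n2] bal]
        | [/succn_inj size_w [/andP[_ all_w] + + +] /suffix_ballot_cons[_ bal]]].
  split; [by rewrite /= size_w | split; rewrite /= ?lt_x3 ?cnt_cons //; lia |].
  by apply/suffix_ballot_cons; split=> //; rewrite !cnt_cons; lia.
by rewrite !cnt_cons => n0 n1 n2; split=> //; split=> //; lia.
Qed.

Lemma mem_suffix_ballots m c0 c1 c2 (w : seq nat) : c0 <= c1 <= c2 ->
  w \in suffix_ballots m c0 c1 c2 <->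
  [/\ size w = m, has_content w c0 c1 c2 & suffix_ballot w].
Proof.
elim: w m c0 c1 c2 => [|x w IHw] [|m] c0 c1 c2 /andP[le01 le12] /=.
- case: ifP => [/and3P[/eqP-> /eqP-> /eqP->] | nz].
    by split=> // _; split=> //; split.
  by split=> [//| [_ [_ c0E c1E c2E] _]]; rewrite -c0E -c1E -c2E in nz.
- by rewrite !mem_cat !mem_map_cons; split=> [| []].
- by case: ifP; split=> [| []].
rewrite !mem_cat !mem_map_cons !mem_if.
case: x => [|[|[|x]]] /=; last by split=> // -[_ [/andP[]]].
- have [c0_0 | c0_pos] := posnP c0.
    by rewrite c0_0; split=> // -[_ [_]]; rewrite cnt_cons.
  rewrite /= orbF (IHw m c0.-1 c1 c2); last by lia.
  by apply: suffix_ballot_cons_step => //; lia.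
- have [le10 | lt01] := leqP c1 c0.
    split=> // -[_ [_ n0 n1 n2] /suffix_ballot_cons[_ bal]]; have := bal 0.
    by rewrite drop0 !cnt_cons in n0 n1 n2 *; lia.
  rewrite /= orbF (IHw m c0 c1.-1 c2); last by lia.
  by apply: suffix_ballot_cons_step => //; lia.
- have [le21 | lt12] := leqP c2 c1.
    split=> // -[_ [_ n0 n1 n2] /suffix_ballot_cons[_ bal]]; have := bal 0.
    by rewrite drop0 !cnt_cons in n0 n1 n2 *; lia.
  rewrite /= (IHw m c0 c1 c2.-1); last by lia.
  by apply: suffix_ballot_cons_step => //; lia.
Qed.

Lemma uniq_suffix_ballots m c0 c1 c2 : uniq (suffix_ballots m c0 c1 c2).
Proof.
elim: m c0 c1 c2 => [|m IHm] c0 c1 c2; first by rewrite /=; case: ifP.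
have uniq_branch (y : nat) b s : uniq s -> uniq [seq y :: v | v <- if b then s else [::]].
  by case: b => // uniq_s; rewrite map_inj_uniq // => u v [].
have head_branch (y : nat) b s u :
    u \in [seq y :: v | v <- if b then s else [::]] -> head 3 u = y.
  by rewrite mem_map_cons; case: u => // x w /andP[/eqP->].
rewrite suffix_ballotsS !cat_uniq !uniq_branch ?IHm //= andbT; apply/andP; split.
  apply/hasPn => u; rewrite mem_cat => /orP[] /head_branch head_u;
  by apply/negP => /head_branch; rewrite head_u.
by apply/hasPn => u /head_branch head_u; apply/negP => /head_branch; rewrite head_u.
Qed.

Lemma size_suffix_ballotsS m c0 c1 c2 : size (suffix_ballots m.+1 c0 c1 c2) =
  (if 0 < c0 then size (suffix_ballots m c0.-1 c1 c2) else 0) +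
  (if c0 < c1 then size (suffix_ballots m c0 c1.-1 c2) else 0) +
  (if c1 < c2 then size (suffix_ballots m c0 c1 c2.-1) else 0).
Proof. by rewrite suffix_ballotsS !size_cat !size_map addnA; do 3 case: ifP. Qed.

(* Hook length formula for the shape (r+y+x, r+y, r): the product of its
   hook lengths is hook_den r y x / hook_num y x. *)
Definition hook_num (y x : nat) : nat := x.+1 * (x + y).+2 * y.+1.
Definition hook_den (r y x : nat) : nat := (r + y + x).+2`! * (r + y).+1`! * r`!.

(* Each branch of the first-letter recursion removes a corner of the shape;
   the three resulting terms add up to the hook length count of the shape. *)
Lemma hook_formula m r y x : m = 3 * r + 2 * y + x ->
  size (suffix_ballots m r (r + y) (r + y + x)) * hook_den r y x = m`! * hook_num y x.
Proof.
elim: m r y x => [|m IHm] r y x def_m.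
  by have [-> [-> ->]] : r = 0 /\ y = 0 /\ x = 0 by lia.
have branch0 : (if 0 < r then size (suffix_ballots m r.-1 (r + y) (r + y + x)) else 0)
    * hook_den r y x = m`! * (r * hook_num y.+1 x).
  have [-> | /prednK r_eq] := posnP r; first by rewrite !mul0n muln0.
  rewrite -r_eq /= (_ : hook_den r.-1.+1 y x = r.-1.+1 * hook_den r.-1 y.+1 x); last first.
    by rewrite /hook_den !addSnnS [r.-1.+1`!]factS; ring.
  by rewrite !addSnnS mulnCA IHm; [ring | lia].
have branch1 : (if r < r + y then size (suffix_ballots m r (r + y).-1 (r + y + x)) else 0)
    * hook_den r y x = m`! * ((r + y).+1 * (x.+2 * (x + y).+2 * y)).
  have [-> | /prednK y_eq] := posnP y; first by rewrite addn0 ltnn !mul0n !muln0.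
  rewrite -y_eq (_ : r < r + y.-1.+1); last by lia.
  rewrite (_ : hook_den r y.-1.+1 x = (r + y.-1).+2 * hook_den r y.-1 x.+1); last first.
    by rewrite /hook_den !addnS addSn [(r + y.-1).+2`!]factS; ring.
  by rewrite addnS /= addSnnS mulnCA IHm /hook_num; [ring | lia].
have branch2 : (if r + y < r + y + x then size (suffix_ballots m r (r + y) (r + y + x).-1)
                else 0) * hook_den r y x = m`! * ((r + y + x).+2 * (x * (x + y).+1 * y.+1)).
  have [-> | /prednK x_eq] := posnP x; first by rewrite addn0 ltnn !mul0n !muln0.
  rewrite -x_eq (_ : r + y < r + y + x.-1.+1); last by lia.
  rewrite (_ : hook_den r y x.-1.+1 = (r + y + x.-1).+3 * hook_den r y x.-1); last first.
    by rewrite /hook_den addnS factS; ring.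
  by rewrite addnS /= mulnCA IHm /hook_num; [ring | lia].
rewrite size_suffix_ballotsS [LHS]mulnDl [in LHS]mulnDl branch0 branch1 branch2.
by rewrite factS def_m /hook_num; ring.
Qed.

Lemma card_ord_prefix m b : b <= m -> #|[set j : 'I_m | j < b]| = b.
Proof.
move=> le_bm; have widen_inj : injective (widen_ord le_bm).
  by move=> i j /(congr1 val) eq_ij; apply: val_inj.
rewrite -[RHS]card_ord -(card_imset _ widen_inj); apply: eq_card => j; rewrite inE.
apply/idP/imsetP => [lt_jb | [i _ ->]]; last exact: (ltn_ord i).
by exists (Ordinal lt_jb) => //; apply: val_inj.
Qed.

Section TableauWords.
Variable n : nat.

Definition square_ballot (w : seq nat) : Prop :=
  [/\ size w = 3 * n, has_content w n n n & ballot w].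

Definition row_of (T : filling n) (k : nat) : nat :=
  if [pick c | T c == k :> nat] is Some c then c.1 else 0.

Definition row_word (T : filling n) : seq nat := [seq row_of T k | k <- iota 0 (3 * n)].

Lemma size_row_word (T : filling n) : size (row_word T) = 3 * n.
Proof. by rewrite size_map size_iota. Qed.

Lemma nth_row_word (T : filling n) k : k < 3 * n -> nth 0 (row_word T) k = row_of T k.
Proof. by move=> lt_k; rewrite (nth_map 0) ?size_iota // nth_iota. Qed.

Lemma row_of_cell (T : filling n) c : injective T -> row_of T (T c) = c.1.
Proof.
move=> inj_T; rewrite /row_of; case: pickP => [c' /eqP/val_inj/inj_T-> // | /(_ c)].
by rewrite eqxx.
Qed.

Section StandardTableau.
Variable T : filling n.
Hypothesis T_syt : T \in SYT n.

Lemma syt_inj : injective T.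
Proof. by move: T_syt; rewrite inE => /and4P[/injectiveP]. Qed.

Lemma syt_surj (k : 'I_(3 * n)) : exists c, T c = k.
Proof. by move: T_syt; rewrite inE => /and4P[_ /forallP/(_ k)/existsP[c /eqP]]; exists c. Qed.

Lemma syt_row a (b1 b2 : 'I_n) : b1 < b2 -> T (a, b1) < T (a, b2).
Proof.
by move: T_syt; rewrite inE => /and4P[_ _ /forallP/(_ a)/forallP/(_ b1)/forallP/(_ b2)/implyP].
Qed.

Lemma syt_col b (a1 a2 : 'I_3) : a1 < a2 -> T (a1, b) < T (a2, b).
Proof.
by move: T_syt; rewrite inE => /and4P[_ _ _ /forallP/(_ b)/forallP/(_ a1)/forallP/(_ a2)/implyP].
Qed.

Lemma cnt_take_row_word (a : 'I_3) k :
  cnt a (take k (row_word T)) = #|[set j : 'I_n | T (a, j) < k]|.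
Proof.
elim: k => [|k IHk].
  by rewrite take0 cnt_nil; apply/esym/eqP; rewrite cards_eq0; apply/eqP/setP => j; rewrite !inE.
have [lt_k | le_k] := ltnP k (3 * n); last first.
  rewrite !take_oversize ?size_row_word 1?leqW // in IHk *; rewrite IHk.
  by apply: eq_card => j; rewrite !inE (leq_trans (ltn_ord _) le_k) (leq_trans _ (leqW le_k)).
rewrite cnt_take_nth ?size_row_word // nth_row_word // IHk.
have [c Tc] := syt_surj (Ordinal lt_k); have {Tc}Tc : (T c : nat) = k by rewrite Tc.
rewrite -Tc row_of_cell; last exact: syt_inj.
have split_set : [set j | T (a, j) < (T c).+1] =
    [set j | T (a, j) < T c] :|: [set j | (a, j) == c].
  by apply/setP => j; rewrite !inE ltnS leq_eqVlt (inj_eq val_inj) (inj_eq syt_inj) orbC.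
rewrite split_set cardsU (_ : _ :&: _ = set0) ?cards0 ?subn0; last first.
  by apply/setP => j; rewrite !inE; case: eqP => [<-|]; rewrite ?ltnn ?andbF.
congr (_ + _); case: c {Tc split_set} => a' j' /=.
case: (eqVneq (a' : nat) a) => [/val_inj-> | neq_a] /=.
  by rewrite (_ : [set j | _] = [set j']) ?cards1 //; apply/setP => j; rewrite !inE xpair_eqE eqxx.
apply/esym/eqP; rewrite cards_eq0; apply/eqP/setP => j; rewrite !inE xpair_eqE.
by apply/negbTE; apply: contra neq_a => /andP[/eqP-> _].
Qed.

Lemma card_row_prefix (a : 'I_3) (b : 'I_n) : #|[set j : 'I_n | T (a, j) < T (a, b)]| = b.
Proof.
rewrite -(card_ord_prefix (ltnW (ltn_ord b))); apply: eq_card => j; rewrite !inE.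
case: (ltngtP j b) => [lt_jb | lt_bj | /val_inj->]; last exact: ltnn.
  exact: syt_row.
by apply/negbTE; rewrite -leqNgt ltnW // syt_row.
Qed.

Lemma cnt_row_word a : a < 3 -> cnt a (row_word T) = n.
Proof.
move=> lt_a3; rewrite -[row_word T]take_size size_row_word (cnt_take_row_word (Ordinal lt_a3)).
by rewrite -[RHS]card_ord; apply: eq_card => j; rewrite !inE ltn_ord.
Qed.

(* Columns increase, so prefixes of the row word are ballot. *)
Lemma row_word_square_ballot : square_ballot (row_word T).
Proof.
split; first exact: size_row_word.
  split; try exact: cnt_row_word.
  by apply/allP => _ /mapP[k _ ->]; rewrite /row_of; case: pickP.
move=> k; have col (a1 a2 : 'I_3) :
    a1 < a2 -> cnt a2 (take k (row_word T)) <= cnt a1 (take k (row_word T)).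
  move=> lt12; rewrite !cnt_take_row_word; apply/subset_leq_card/subsetP => j.
  by rewrite !inE; apply: ltn_trans; exact: syt_col.
by rewrite (col (@Ordinal 3 1 isT) (@Ordinal 3 2 isT)) // (col (@Ordinal 3 0 isT) (@Ordinal 3 1 isT)).
Qed.
End StandardTableau.

(* The filling whose cell (a,b) holds the position of the (b+1)-th letter a
   (the default value is never used on square ballot words). *)
Definition tableau_of (w : seq nat) : filling n :=
  [ffun c : 'I_3 * 'I_n => insubd (widen_ord (leq_pmull n (isT : 0 < 3)) c.2) (occ c.1 c.2 w)].

Section SquareBallotWord.
Variable w : seq nat.
Hypothesis w_ballot : square_ballot w.

Lemma cnt_square_ballot a : a < 3 -> cnt a w = n.
Proof. by case: w_ballot => _ [_ n0 n1 n2] _; case: a => [|[|[|a]]]. Qed.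

Lemma occ_square_ballot (c : 'I_3 * 'I_n) :
  [/\ occ c.1 c.2 w < 3 * n, nth 0 w (occ c.1 c.2 w) = c.1
    & cnt c.1 (take (occ c.1 c.2 w) w) = c.2].
Proof.
case: w_ballot => size_w _ _; rewrite -size_w; apply: occ_spec.
by rewrite cnt_square_ballot ?ltn_ord.
Qed.

Lemma cell_at k : k < 3 * n ->
  exists2 c : 'I_3 * 'I_n, (c.1 : nat) = nth 0 w k & occ c.1 c.2 w = k.
Proof.
case: w_ballot => size_w [all_w _ _ _] _; rewrite -size_w => lt_kw.
have lt_a3 : nth 0 w k < 3 := allP all_w _ (mem_nth 0 lt_kw).
have lt_bn : cnt (nth 0 w k) (take k w) < n.
  have := cnt_take_mono (nth 0 w k) w lt_kw.
  by rewrite cnt_take_nth // eqxx addn1 take_size cnt_square_ballot.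
by exists (Ordinal lt_a3, Ordinal lt_bn); rewrite //= occ_unique.
Qed.

Lemma tableau_ofE (c : 'I_3 * 'I_n) : (tableau_of w c : nat) = occ c.1 c.2 w.
Proof. by rewrite ffunE val_insubd; case: (occ_square_ballot c) => ->. Qed.

Lemma tableau_of_syt : tableau_of w \in SYT n.
Proof.
case: w_ballot => _ _ bal; rewrite inE; apply/and4P; split.
- apply/injectiveP => -[a1 b1] [a2 b2] /(congr1 val) /=; rewrite !tableau_ofE /= => eq_occ.
  have /= [_ nth1 cnt1] := occ_square_ballot (a1, b1).
  have /= [_ nth2 cnt2] := occ_square_ballot (a2, b2).
  have eq_a : a1 = a2 by apply: val_inj; rewrite /= -nth1 -nth2 eq_occ.
  have eq_b : b1 = b2 by apply: val_inj; rewrite /= -cnt1 -cnt2 eq_occ eq_a.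
  by rewrite eq_a eq_b.
- apply/forallP => k; apply/existsP; have [c _ occ_c] := cell_at (ltn_ord k).
  by exists c; apply/eqP/val_inj; rewrite /= tableau_ofE.
- apply/forallP => a; apply/forallP => b1; apply/forallP => b2; apply/implyP => lt12.
  by rewrite !tableau_ofE occ_mono_index // cnt_square_ballot.
- apply/forallP => b; apply/forallP => a1; apply/forallP => a2; apply/implyP => lt12.
  rewrite !tableau_ofE occ_mono_letter ?cnt_square_ballot //; last by rewrite neq_ltn lt12.
  by apply: ballot_dominates bal _; rewrite lt12 ltn_ord.
Qed.

Lemma row_word_tableau_of : row_word (tableau_of w) = w.
Proof.
case: w_ballot => size_w _ _; apply: (@eq_from_nth _ 0); first by rewrite size_row_word size_w.
move=> k; rewrite size_row_word => lt_k; have [c <- occ_c] := cell_at lt_k.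
by rewrite nth_row_word // -occ_c -(tableau_ofE c) (row_of_cell c (syt_inj tableau_of_syt)).
Qed.
End SquareBallotWord.

Lemma tableau_of_row_word T : T \in SYT n -> tableau_of (row_word T) = T.
Proof.
move=> T_syt; apply/ffunP => -[a b]; apply: val_inj.
rewrite /= (tableau_ofE (row_word_square_ballot T_syt)) /=.
rewrite -{1}(card_row_prefix T_syt a b) -cnt_take_row_word //; apply: occ_unique.
  by rewrite size_row_word.
by rewrite nth_row_word // (row_of_cell (a, b) (syt_inj T_syt)).
Qed.
End TableauWords.

Lemma mem_square_ballots n (w : seq nat) : w \in suffix_ballots (3 * n) n n n <-> square_ballot n w.
Proof.
rewrite mem_suffix_ballots ?leqnn //.
by split=> -[size_w content_w bal]; split=> //; apply/(ballot_suffix_ballot content_w).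
Qed.

Lemma perm_SYT n :
  perm_eq (enum (SYT n)) [seq tableau_of n w | w <- suffix_ballots (3 * n) n n n].
Proof.
apply: uniq_perm; first exact: enum_uniq.
  rewrite map_inj_in_uniq ?uniq_suffix_ballots // => w1 w2 /mem_square_ballots ballot1.
  move=> /mem_square_ballots ballot2 eq12.
  by rewrite -(row_word_tableau_of ballot1) eq12 row_word_tableau_of.
move=> T; rewrite mem_enum; apply/idP/mapP => [T_syt | [w /mem_square_ballots w_ballot ->]].
  exists (row_word T); last by rewrite tableau_of_row_word.
  by apply/mem_square_ballots; exact: row_word_square_ballot.
exact: tableau_of_syt.
Qed.

Lemma card_SYT n : #|SYT n| = size (suffix_ballots (3 * n) n n n).
Proof. by rewrite cardE (perm_size (perm_SYT n)) size_map. Qed.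

Lemma sum_SYT n (R : nmodType) (F : filling n -> R) :
  (\sum_(T in SYT n) F T = \sum_(w <- suffix_ballots (3 * n) n n n) F (tableau_of n w))%R.
Proof. by rewrite -big_enum (perm_big _ (perm_SYT n)) big_map. Qed.

Lemma entry12_tableau_of k (w : seq nat) : square_ballot k.+2 w ->
  entry (tableau_of k.+2 w) 1 2 = (occ 0 1 w).+1.
Proof.
move=> w_ballot; rewrite /entry /= !insubT /=.
by rewrite (tableau_ofE w_ballot (@Ordinal 3 0 isT, @Ordinal k.+2 1 isT)).
Qed.

Lemma square_ballots_split k : suffix_ballots (3 * k.+2) k.+2 k.+2 k.+2 =
  [seq 0 :: w | w <- [seq 0 :: w | w <- suffix_ballots (3 * k + 4) k k.+2 k.+2] ++
    [seq 1 :: w | w <- [seq 0 :: w | w <- suffix_ballots (3 * k + 3) k k.+1 k.+2] ++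
      [seq 2 :: w | w <- [seq 0 :: w | w <- suffix_ballots (3 * k + 2) k k.+1 k.+1]]]].
Proof.
rewrite (_ : 3 * k.+2 = (3 * k + 4).+2); last by lia.
rewrite !suffix_ballotsS ltnn ltnSn /= !cats0; congr [seq _ | _ <- _ ++ [seq _ | _ <- _]].
rewrite (_ : 3 * k + 4 = (3 * k + 3).+1) ?suffix_ballotsS ?ltnn ?ltnSn /= ?cats0; last by lia.
congr (_ ++ [seq _ | _ <- _]).
by rewrite (_ : 3 * k + 3 = (3 * k + 2).+1) ?suffix_ballotsS ?ltnn /= ?cats0; last by lia.
Qed.

Lemma entry12_values k (T : filling k.+2) : T \in SYT k.+2 -> entry T 1 2 \in [:: 2; 3; 4].
Proof.
move=> T_syt; rewrite -(tableau_of_row_word T_syt) entry12_tableau_of; last first.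
  exact: row_word_square_ballot.
have /mem_square_ballots := row_word_square_ballot T_syt; rewrite square_ballots_split.
case/mapP=> w1 + ->; rewrite mem_cat => /orP[/mapP[u _ ->] // |].
case/mapP=> w2 + ->; rewrite mem_cat => /orP[/mapP[u _ ->] // |].
by case/mapP=> w3 /mapP[u _ ->] ->.
Qed.

Local Open Scope ring_scope.

Lemma sumr_const_seq (V : nmodType) (T : Type) (s : seq T) (v : V) :
  \sum_(i <- s) v = v *+ size s.
Proof. by elim: s => [|t s IHs]; rewrite ?big_nil ?big_cons ?IHs ?mulrS. Qed.

Lemma sum_entry12 k (R : numFieldType) (x : R) :
  \sum_(T in SYT k.+2) x ^+ entry T 1 2 =
    x ^+ 2 *+ size (suffix_ballots (3 * k + 4) k k.+2 k.+2)
  + x ^+ 3 *+ size (suffix_ballots (3 * k + 3) k k.+1 k.+2)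
  + x ^+ 4 *+ size (suffix_ballots (3 * k + 2) k k.+1 k.+1).
Proof.
rewrite sum_SYT (eq_big_seq (fun w => x ^+ (occ 0 1 w).+1)); last first.
  by move=> w /mem_square_ballots/entry12_tableau_of->.
by rewrite square_ballots_split !(big_map, big_cat) /= !sumr_const_seq addrA.
Qed.

Lemma hook_formulaR (R : numFieldType) m r y x : m = (3 * r + 2 * y + x)%N ->
  (size (suffix_ballots m r (r + y) (r + y + x)))%:R
  = (m`! * hook_num y x)%:R / (hook_den r y x)%:R :> R.
Proof.
move=> def_m; rewrite -(hook_formula def_m) natrM mulfK // pnatr_eq0 -lt0n.
by rewrite /hook_den !muln_gt0 !fact_gt0.
Qed.

Lemma expectation_formula (R : numFieldType) (x : R) k :
  (x ^+ 2 *+ size (suffix_ballots (3 * k + 4) k k.+2 k.+2)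
  + x ^+ 3 *+ size (suffix_ballots (3 * k + 3) k k.+1 k.+2)
  + x ^+ 4 *+ size (suffix_ballots (3 * k + 2) k k.+1 k.+1))
  / (size (suffix_ballots (3 * k.+2) k.+2 k.+2 k.+2))%:R =
       (2 * (k.+2%:R - 1)) / (3 * k.+2%:R - 1) * x ^+ 2
     + (8 * (k.+2%:R - 1) * (k.+2%:R + 1)) / (3 * (3 * k.+2%:R - 1) * (3 * k.+2%:R - 2)) * x ^+ 3
     + ((k.+2%:R + 1) * (k.+2%:R + 2)) / (3 * (3 * k.+2%:R - 1) * (3 * k.+2%:R - 2)) * x ^+ 4.
Proof.
have eN := hook_formulaR R (m := 3 * k.+2) (r := k.+2) (y := 0) (x := 0) ltac:(lia).
have eA := hook_formulaR R (m := 3 * k + 4) (r := k) (y := 2) (x := 0) ltac:(lia).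
have eB := hook_formulaR R (m := 3 * k + 3) (r := k) (y := 1) (x := 1) ltac:(lia).
have eC := hook_formulaR R (m := 3 * k + 2) (r := k) (y := 1) (x := 0) ltac:(lia).
rewrite !addn0 in eN; rewrite addn0 addn2 in eA; rewrite !addn1 in eB; rewrite addn0 addn1 in eC.
rewrite -[x ^+ 2 *+ _]mulr_natr -[x ^+ 3 *+ _]mulr_natr -[x ^+ 4 *+ _]mulr_natr.
rewrite eN eA eB eC /hook_num /hook_den.
(* Write every factorial argument as an iterated successor of k or of 3k, so
   that factS leaves only the two atoms k`! and (3k)`!. *)
rewrite (_ : (3 * k.+2 = (3 * k).+4.+2)%N); last by lia.
rewrite (_ : (3 * k + 4 = (3 * k).+4)%N); last by lia.
rewrite (_ : (3 * k + 3 = (3 * k).+3)%N); last by lia.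
rewrite !addn0 !addn1 !addn2 !factS.
have -> : 3 * k.+2%:R - 1 = (3 * k + 5)%:R :> R by rewrite natrD natrM; ring.
have -> : 3 * k.+2%:R - 2 = (3 * k + 4)%:R :> R by rewrite natrD natrM; ring.
field; rewrite -!natrM !nat1r -!natrD !pnatr_eq0.
by have := fact_gt0 k; have := fact_gt0 (3 * k); lia.
Qed.

Theorem mainTheorem8 (n : nat) (hn : (2 <= n)%N) :
  (forall T : filling n, T \in SYT n -> entry T 1 2 \in [:: 2; 3; 4]%N) /\
  (forall (R : numFieldType) (x : R),
     (\sum_(T in SYT n) x ^+ entry T 1 2) / #|SYT n|%:R =
       (2 * (n%:R - 1)) / (3 * n%:R - 1) * x ^+ 2
     + (8 * (n%:R - 1) * (n%:R + 1)) / (3 * (3 * n%:R - 1) * (3 * n%:R - 2)) * x ^+ 3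
     + ((n%:R + 1) * (n%:R + 2)) / (3 * (3 * n%:R - 1) * (3 * n%:R - 2)) * x ^+ 4).
Proof.
case: n hn => [|[|k]] // _; split=> [T | R x]; first exact: entry12_values.
by rewrite sum_entry12 card_SYT expectation_formula.
Qed.
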